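(* Let $W$ be a finite-dimensional real vector space and let $N$ be a $5$-linear form on $W$, written in components as $N_{ijk\ell m}$ (thought of as $R_{ijk\ell,m}$), having the algebraic symmetries of the covariant derivative of a Riemann curvature tensor: (i) $N_{ijk\ell m}=-N_{jik\ell m}$; (ii) $N_{ijk\ell m}=N_{k\ell ij m}$; (iii) $N_{ijk\ell m}+N_{jki\ell m}+N_{kij\ell m}=0$ (first Bianchi identity in the first three indices); (iv) $N_{ijk\ell m}+N_{ij\ell m k}+N_{ijmk\ell}=0$ (Bianchi identity in the last three indices). Suppose moreover that for all indices $i,j,k,\ell,m$ $$N_{ijk\ell m}+N_{kjm\ell i}+N_{mji\ell k}+N_{i\ell kjm}+N_{k\ell mji}+N_{m\ell ijk}=0,$$ equivalently, for all $X,Y,U,V,Z\in W$, $N(X,V,Y,Z,U)+N(Y,V,U,Z,X)+N(U,V,X,Z,Y)+N(X,Z,Y,V,U)+N(Y,Z,U,V,X)+N(U,Z,X,V,Y)=0$. Then $N=0$. *)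

From HB Require Import structures.
From mathcomp Require Import all_boot all_order all_algebra.
From mathcomp Require Import reals.
Set Implicit Arguments. Unset Strict Implicit. Unset Printing Implicit Defensive.
Import Order.TTheory GRing.Theory Num.Theory.
Local Open Scope ring_scope.

Definition multilinear5 (R : realType) (W : vectType R)
  (N : W -> W -> W -> W -> W -> R) : Prop :=
  [/\ (forall (a : R) x x' y z u v,
         N (a *: x + x') y z u v = a * N x y z u v + N x' y z u v),
      (forall (a : R) x y y' z u v,
         N x (a *: y + y') z u v = a * N x y z u v + N x y' z u v),
      (forall (a : R) x y z z' u v,
         N x y (a *: z + z') u v = a * N x y z u v + N x y z' u v),
      (forall (a : R) x y z u u' v,
         N x y z (a *: u + u') v = a * N x y z u v + N x y z u' v) &
      (forall (a : R) x y z u v v',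
         N x y z u (a *: v + v') = a * N x y z u v + N x y z u v')].

From mathcomp Require Import all_boot all_algebra.
From mathcomp Require Import reals ring.
Import GRing.Theory Num.Theory.
Local Open Scope ring_scope.

(** The first Bianchi identity turns the difference of
    the two halves of the hypothesis (the half with [V] in the second slot
    and the half with [Z] there) into a cyclic sum that vanishes by the
    second Bianchi identity, so each half vanishes separately.  Two instances
    of that vanishing half make [N] skew under exchanging its first and fifth
    arguments; together with the curvature symmetries this makes [N]
    alternating, and an alternating form satisfying the first Bianchi
    identity is zero. *)

Section AlternatingDerivedCurvature.

Variables (R : numDomainType) (W : Type) (N : W -> W -> W -> W -> W -> R).

Hypothesis N_skew12 : forall a b c d e, N a b c d e = - N b a c d e.
Hypothesis N_pair : forall a b c d e, N a b c d e = N c d a b e.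
Hypothesis N_bianchi1 : forall a b c d e,
  N a b c d e + N b c a d e + N c a b d e = 0.
Hypothesis N_bianchi2 : forall a b c d e,
  N a b c d e + N a b d e c + N a b e c d = 0.

Lemma N_skew34 a b c d e : N a b c d e = - N a b d c e.
Proof. by rewrite N_pair N_skew12 -N_pair. Qed.

Lemma N_bianchi1_234 a b c d e : N a b c d e + N a c d b e + N a d b c e = 0.
Proof.
rewrite [N a b c d e]N_pair [N a c d b e]N_pair [N a d b c e]N_pair.
rewrite [N c d a b e]N_skew34 [N d b a c e]N_skew34 [N b c a d e]N_skew34.
rewrite -[RHS]oppr0 -(N_bianchi1 b c d a e); ring.
Qed.

Lemma N_exchange24 a b c d e : N a d c b e = N a b c d e + N a c d b e.
Proof.
apply: subr0_eq; rewrite [N a d c b e]N_skew34 -[RHS]oppr0.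
by rewrite -(N_bianchi1_234 a b c d e); ring.
Qed.

Definition cycle135 a c e b d := N a b c d e + N c b e d a + N e b a d c.

Lemma cycle135C a c e b d : cycle135 a c e b d = cycle135 a c e d b.
Proof.
rewrite /cycle135 [N a d c b e]N_exchange24 [N c d e b a]N_exchange24.
rewrite [N e d a b c]N_exchange24.
rewrite [N a c d b e]N_pair [N c e d b a]N_pair [N e a d b c]N_pair.
apply: subr0_eq; rewrite -[RHS]oppr0 -(N_bianchi2 d b a c e); ring.
Qed.

Hypothesis cycle135_sym_eq0 : forall X Y U V Z : W,
     N X V Y Z U + N Y V U Z X + N U V X Z Y
   + N X Z Y V U + N Y Z U V X + N U Z X V Y = 0.

Lemma cycle135_eq0 a c e b d : cycle135 a c e b d = 0.
Proof.
have twice : cycle135 a c e b d *+ 2 = 0.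
  rewrite mulr2n {2}cycle135C -(cycle135_sym_eq0 a c e b d) /cycle135.
  ring.
by move/eqP: twice; rewrite mulrn_eq0 => /eqP.
Qed.

Lemma N_skew15 a b c d e : N a b c d e = - N e b c d a.
Proof.
have twice : (N a b c d e + N e b c d a) *+ 2 =
    cycle135 a c e b d - cycle135 a d e b c
    + (N e b a c d + N e b c d a + N e b d a c).
  rewrite /cycle135 [N a b d c e]N_skew34 [N e b a d c]N_skew34.
  rewrite [N c b e d a]N_pair [N d b e c a]N_pair [N e d c b a]N_exchange24.
  ring.
move/eqP: twice; rewrite !cycle135_eq0 N_bianchi2 subrr addr0.
by rewrite mulrn_eq0 addr_eq0 => /eqP.
Qed.

Lemma N_skew25 a b c d e : N a b c d e = - N a e c d b.
Proof. by rewrite N_skew12 N_skew15 [N e a c d b]N_skew12 opprK. Qed.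

Lemma N_skew35 a b c d e : N a b c d e = - N a b e d c.
Proof. by rewrite N_pair N_skew15 [N e d a b c]N_pair. Qed.

Lemma N_skew23 a b c d e : N a b c d e = - N a c b d e.
Proof. by rewrite N_skew25 [N a e c d b]N_skew35 N_skew25 !opprK. Qed.

Lemma N_eq0 a b c d e : N a b c d e = 0.
Proof.
have := N_bianchi1 a b c d e.
rewrite [N b c a d e]N_skew23 [N b a c d e]N_skew12 [N c a b d e]N_skew12.
rewrite [N a c b d e]N_skew23 !opprK -mulr2n -mulrSr => /eqP.
by rewrite mulrn_eq0 => /eqP.
Qed.

End AlternatingDerivedCurvature.

Theorem mainTheorem3 (R : realType) (W : vectType R)
  (N : W -> W -> W -> W -> W -> R)
  (Hlin : multilinear5 N)
  (H1 : forall i j k l m : W, N i j k l m = - N j i k l m)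
  (H2 : forall i j k l m : W, N i j k l m = N k l i j m)
  (H3 : forall i j k l m : W, N i j k l m + N j k i l m + N k i j l m = 0)
  (H4 : forall i j k l m : W, N i j k l m + N i j l m k + N i j m k l = 0)
  (H5 : forall X Y U V Z : W,
     N X V Y Z U + N Y V U Z X + N U V X Z Y
   + N X Z Y V U + N Y Z U V X + N U Z X V Y = 0) :
  forall X Y Z U V : W, N X Y Z U V = 0.
Proof. exact: N_eq0 H1 H2 H3 H4 H5. Qed.
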